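(* Let $k\geq 1$, let $G$ be a connected graph, and let $e=(u,v)\in E(G)$ be a bridge of $G$. Suppose there is a maximum $k$-edge-colorable subgraph $H_k$ of $G$ with $e\in E(H_k)$. Let $G_1,G_2$ be the two components of $G-e$, and let $G_1e$, $G_2e$ be the graphs obtained from $G_1$, $G_2$ respectively by adding the edge $e$ together with its endpoint not in the component (so $E(G_ie)=E(G_i)\cup\{e\}$). Then $\nu_{k}(G)=\nu_{k}(G_{1}e)+\nu_{k}(G_{2}e)-1$.
   Context: Graphs are finite, without loops, possibly with multiple edges. $\nu_k(G)$ is the maximum number of edges of a $k$-edge-colorable subgraph of $G$; a maximum $k$-edge-colorable subgraph is one attaining $\nu_k(G)$ edges. A bridge is an edge whose removal increases the number of connected components. *)

From mathcomp Require Import all_boot.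
Set Implicit Arguments. Unset Strict Implicit. Unset Printing Implicit Defensive.

(* A finite loopless multigraph: vertex type V, edge type E, each edge f has
   endpoints src f and dst f (with src f != dst f).  Parallel edges allowed. *)

Section Graphs.
Variables (V E : finType) (src dst : E -> V).

Definition loopless : Prop := forall f : E, src f != dst f.

Definition incident (f : E) (x : V) : bool := (src f == x) || (dst f == x).

Definition share_end (f g : E) : bool :=
  incident g (src f) || incident g (dst f).

Definition adjS (S : {set E}) : rel V :=
  fun x y => [exists f in S, ((src f == x) && (dst f == y)) ||
                             ((src f == y) && (dst f == x))].

Definition ncomp (S : {set E}) : nat := n_comp (adjS S) predT.

Definition connected_graph : Prop := ncomp [set: E] = 1.

Definition is_bridge (e : E) : Prop := ncomp ([set: E] :\ e) > ncomp [set: E].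

Definition k_colorableb (k : nat) (F : {set E}) : bool :=
  [exists c : {ffun E -> 'I_k}, [forall f in F, forall g in F,
     (f != g) ==> share_end f g ==> (c f != c g)]].

Definition nu (k : nat) (S : {set E}) : nat :=
  \max_(F : {set E} | (F \subset S) && k_colorableb k F) #|F|.

Definition max_k_col_sub (k : nat) (H : {set E}) : Prop :=
  k_colorableb k H /\ #|H| = nu k [set: E].

(* Edge set of G_1 e : the edges of the component of G - e containing x,
   together with e.  (G_1e has vertex set V(G_1) ∪ {other endpoint of e};
   nu_k depends only on the edge set.) *)
Definition side_e (e : E) (x : V) : {set E} :=
  e |: [set f | (f != e) && connect (adjS ([set: E] :\ e)) x (src f)].

End Graphs.

From mathcomp Require Import all_boot zify perm.
Set Implicit Arguments. Unset Strict Implicit. Unset Printing Implicit Defensive.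

(* Removing the bridge e = (s, d) splits the edges into the two sides
   A = E(G_1 e) and B = E(G_2 e), which meet exactly in e and otherwise share
   no endpoint.  Hence a k-colourable F is the union of the k-colourable
   F :&: A and F :&: B; when e is in F these overlap in e, which gives
   nu(G) + 1 <= nu(A) + nu(B).  Conversely, colourings of X ⊆ A and Y ⊆ B
   glue to one of X :|: Y as soon as e lies in both or in neither: recolour Y
   by the transposition of the two colours of e.  Taking maximum X, Y and
   dropping e from both unless it lies in both gives the reverse inequality. *)

Section Graphs.
Variables (V E : finType) (src dst : E -> V).
Local Notation adjS := (adjS src dst).
Local Notation share_end := (share_end src dst).
Local Notation k_colorableb := (k_colorableb src dst).
Local Notation nu := (nu src dst).

Lemma adjS_sym S : symmetric (adjS S).
Proof.
by move=> x y; apply/existsP/existsP => -[f /andP[fS h]]; exists f; rewrite fS orbC.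
Qed.

Lemma share_endC : symmetric share_end.
Proof.
move=> f g; rewrite /share_end /incident !(eq_sym (src g)) !(eq_sym (dst g)).
by case: (src f == src g); case: (src f == dst g); case: (dst f == src g).
Qed.

Lemma colorableP k (F : {set E}) :
  reflect (exists c : {ffun E -> 'I_k}, forall f g, f \in F -> g \in F ->
             f != g -> share_end f g -> c f != c g)
          (k_colorableb k F).
Proof.
apply: (iffP existsP) => -[c Hc]; exists c.
  move=> f g fF gF; move/forall_inP/(_ f fF)/forall_inP/(_ g gF): Hc.
  by move=> /implyP Hfg /Hfg /implyP.
by apply/forall_inP => f fF; apply/forall_inP => g gF; apply/implyP => fg;
   apply/implyP; apply: Hc.
Qed.

Lemma colorable_subset k (F F' : {set E}) :
  F \subset F' -> k_colorableb k F' -> k_colorableb k F.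
Proof.
move=> sFF' /colorableP[c Hc]; apply/colorableP; exists c => f g fF gF.
by apply: Hc; apply: (subsetP sFF').
Qed.

Lemma leq_card_nu k (S F : {set E}) :
  F \subset S -> k_colorableb k F -> #|F| <= nu k S.
Proof. by move=> sFS colF; apply: (leq_bigmax_cond F); rewrite sFS colF. Qed.

Lemma nu_attained k (S : {set E}) : 0 < k ->
  exists2 F : {set E}, (F \subset S) && k_colorableb k F & nu k S = #|F|.
Proof.
move=> k_gt0; have col0 : (set0 \subset S) && k_colorableb k set0.
  by rewrite sub0set; apply/colorableP; exists [ffun=> Ordinal k_gt0] => f g; rewrite inE.
by rewrite /nu (bigmax_eq_arg set0) //; case: arg_maxnP => // F ? _; exists F.
Qed.

Section Bridge.
Variable e : E.
Local Notation s := (src e).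
Local Notation d := (dst e).
Local Notation R := (connect (adjS ([set: E] :\ e))).
Local Notation A := (side_e src dst e s).
Local Notation B := (side_e src dst e d).

Let R_sym : connect_sym (adjS ([set: E] :\ e)).
Proof. exact/sym_connect_sym/adjS_sym. Qed.

Lemma adjS_setT_bridge x y : adjS [set: E] x y ->
  R x y \/ (x \in pred2 s d) && (y \in pred2 s d).
Proof.
case/existsP=> f /andP[_ h]; have [fe|fe] := eqVneq f e; first subst f.
  by right; case/orP: h => /andP[/eqP<- /eqP<-]; rewrite !inE !eqxx ?orbT.
by left; apply: connect1; apply/existsP; exists f; rewrite !inE fe.
Qed.

Lemma connect_setT_bridge y :
  connect (adjS [set: E]) s y -> R s y || R d y.
Proof.
have cl : closed (adjS [set: E]) [pred y | R s y || R d y].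
  apply: (intro_closed (sym_connect_sym (adjS_sym _))) => a b /adjS_setT_bridge[Rab|].
    by case/orP=> Ra; apply/orP; [left|right]; apply: connect_trans Rab.
  by case/andP=> _ /pred2P[]-> _; rewrite inE /= connect0 ?orbT.
by move/(closed_connect cl); rewrite !inE /= connect0 => <-.
Qed.

Lemma bridge_disconnects : is_bridge src dst e -> ~~ R s d.
Proof.
apply: contraL => Rsd; rewrite /is_bridge /ncomp -leqNgt leq_eqVlt; apply/orP; left.
apply/eqP/eq_n_comp => x y; apply/idP/idP; apply: connect_sub => a b.
  case/existsP=> f /andP[/setD1P[_ fE] h]; apply: connect1.
  by apply/existsP; exists f; rewrite fE.
case/adjS_setT_bridge => [//|/andP[/pred2P[]-> /pred2P[]->]];
by rewrite ?connect0 // R_sym.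
Qed.

Lemma connected_to_src :
  connected_graph src dst -> forall x, connect (adjS [set: E]) s x.
Proof.
move=> conn x; have sym := sym_connect_sym (adjS_sym [set: E]).
apply/negPn/negP => nsx.
have : n_comp (adjS [set: E]) (closure (adjS [set: E]) (pred2 s x)) <= 1.
  rewrite -conn; apply: subset_leq_card; apply/subsetP => z /andP[rz _].
  by rewrite !inE rz.
by rewrite n_comp_closure2 // nsx.
Qed.

Lemma side_ends x f :
  f \in side_e src dst e x -> f != e -> R x (src f) && R x (dst f).
Proof.
rewrite !inE => /orP[->//|/andP[fe Rxf] _]; rewrite Rxf /=.
by apply: connect_trans Rxf (connect1 _); apply/existsP; exists f; rewrite !inE fe !eqxx.
Qed.

Section Sides.
Hypothesis nRsd : ~~ R s d.
Hypothesis conn : forall x, connect (adjS [set: E]) s x.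

Lemma sides_cover f : (f \in A) || (f \in B).
Proof. by rewrite !inE; case: eqP => //= _; apply: connect_setT_bridge. Qed.

Lemma sides_meet f : f \in A -> f \in B -> f = e.
Proof.
rewrite !inE; case: eqP => //= _ Rsf Rdf; case/negP: nRsd.
by apply: connect_trans Rsf _; rewrite R_sym.
Qed.

Lemma sides_no_share f g : f \in A -> g \in B -> f != e -> g != e -> ~~ share_end f g.
Proof.
move=> fA gB fe ge; move: (side_ends fA fe) (side_ends gB ge).
case/andP=> Rs1 Rs2 /andP[Rd1 Rd2]; apply/negP => sh; case/negP: nRsd.
have [v Rsv Rdv] : exists2 v, R s v & R d v.
  move: sh Rd1 Rd2; rewrite /share_end /incident => /orP[]/orP[]/eqP-> Rd1 Rd2;
  by [exists (src f) | exists (dst f)].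
by rewrite (connect_trans Rsv) // R_sym.
Qed.

Lemma colorable_glue k (X Y : {set E}) : X \subset A -> Y \subset B ->
  (e \in X) = (e \in Y) -> k_colorableb k X -> k_colorableb k Y ->
  k_colorableb k (X :|: Y).
Proof.
move=> sXA sYB eXY /colorableP[c1 H1] /colorableP[c2 H2]; apply/colorableP.
pose t := tperm (c2 e) (c1 e).
exists [ffun f => if f \in X then c1 f else t (c2 f)].
have cross f g : f \in X -> g \in Y -> g \notin X -> f != g -> share_end f g ->
    c1 f != t (c2 g).
  move=> fX gY gX fg sh.
  have ge : g != e by apply: contraNneq gX => ge; rewrite ge eXY -ge.
  have [fe|fe] := eqVneq f e.
    subst f; rewrite -{1}(tpermL (c2 e) (c1 e)) (inj_eq perm_inj).
    by apply: H2; rewrite // -eXY.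
  have := sides_no_share (subsetP sXA _ fX) (subsetP sYB _ gY) fe ge.
  by rewrite sh.
move=> f g; rewrite !inE !ffunE.
case fX: (f \in X); case gX: (g \in X) => /= fXY gXY fg sh.
- exact: H1.
- exact: cross fX gXY (negbT gX) fg sh.
- by rewrite eq_sym (cross _ _ gX fXY (negbT fX)) // 1?eq_sym // share_endC.
- by rewrite (inj_eq perm_inj) H2.
Qed.

Lemma card_sidesUI (X Y : {set E}) : X \subset A -> Y \subset B ->
  #|X :|: Y| + ((e \in X) && (e \in Y)) = #|X| + #|Y|.
Proof.
move=> sXA sYB; rewrite -cardsUI (cardsD1 e (X :&: Y)) inE.
suff -> : X :&: Y :\ e = set0 by rewrite cards0 addn0.
apply/setP => f; rewrite !inE; apply/negP => /and3P[fe fX fY]; case/eqP: fe.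
exact: sides_meet (subsetP sXA _ fX) (subsetP sYB _ fY).
Qed.

Lemma nu_sides_ge k (H : {set E}) : k_colorableb k H -> e \in H ->
  #|H| + 1 <= nu k A + nu k B.
Proof.
move=> colH eH; have eA : e \in A by rewrite !inE eqxx.
have eB : e \in B by rewrite !inE eqxx.
have splitH : H = (H :&: A) :|: (H :&: B).
  by apply/setP => f; rewrite in_setU !in_setI -andb_orr sides_cover andbT.
have := card_sidesUI (subsetIr H A) (subsetIr H B).
rewrite !in_setI eH eA eB -splitH => ->; apply: leq_add;
by apply: leq_card_nu (subsetIr _ _) (colorable_subset (subsetIl _ _) colH).
Qed.

Lemma nu_sides_le k : 0 < k -> nu k A + nu k B <= nu k [set: E] + 1.
Proof.
move=> k_gt0; have [F1 /andP[sF1 colF1] ->] := nu_attained A k_gt0.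
have [F2 /andP[sF2 colF2] ->] := nu_attained B k_gt0.
have [/andP[eF1 eF2]|eF12] := boolP ((e \in F1) && (e \in F2)).
  have := card_sidesUI sF1 sF2; rewrite eF1 eF2 => <-; rewrite leq_add2r.
  by apply: leq_card_nu (subsetT _) (colorable_glue sF1 sF2 _ colF1 colF2); rewrite eF1 eF2.
have sX : F1 :\ e \subset A by apply: subset_trans sF1; apply: subD1set.
have sY : F2 :\ e \subset B by apply: subset_trans sF2; apply: subD1set.
have colXY : k_colorableb k (F1 :\ e :|: F2 :\ e).
  apply: colorable_glue sX sY _ (colorable_subset (subD1set F1 e) colF1)
    (colorable_subset (subD1set F2 e) colF2); by rewrite !setD11.
have := card_sidesUI sX sY; rewrite !setD11 addn0 (cardsD1 e F1) (cardsD1 e F2).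
have := leq_card_nu (subsetT _) colXY; move: eF12.
by case: (e \in F1); case: (e \in F2) => //= _; lia.
Qed.

End Sides.
End Bridge.
End Graphs.

Theorem lemma7 (V E : finType) (src dst : E -> V) (k : nat) (e : E) :
  loopless src dst ->
  1 <= k ->
  connected_graph src dst ->
  is_bridge src dst e ->
  (exists H : {set E}, max_k_col_sub src dst k H /\ e \in H) ->
  nu src dst k [set: E] =
    nu src dst k (side_e src dst e (src e)) +
    nu src dst k (side_e src dst e (dst e)) - 1.
Proof.
(* Loops are harmless: a loop at a vertex of G_i lies on side i. *)
move=> _ k_gt0 conn bridge [H [[colH cardH] eH]].
have nRsd := bridge_disconnects bridge.
have conn_s := connected_to_src e conn.
have := nu_sides_ge nRsd conn_s colH eH.
have := nu_sides_le nRsd k_gt0.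
rewrite cardH; lia.
Qed.
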